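(* Let $\underline{\mathrm{set}}$ be the category of finite sets. Then its Grothendieck heap $\mathrm{K}_0^{\mathrm{heap}}(\underline{\mathrm{set}})$ is isomorphic to the heap associated with $(\mathbb{Z},+)$, i.e. $\mathbb{Z}$ with $[a,b,c]=a-b+c$, via $\overline{A}\mapsto |A|$; moreover, the truss structure induced by the cartesian product, $\overline{A}\,\overline{B}=\overline{A\times B}$, coincides with the truss associated with the ring $(\mathbb{Z},+,\cdot)$.
   Context: A heap is a set $H$ with a ternary operation $[\_,\_,\_]:H^3\to H$ satisfying $[a,b,[c,d,e]]=[[a,b,c],d,e]$ and $[x,x,y]=y=[y,x,x]$; a truss is a heap with a multiplication satisfying $[wx,wy,wz]=w[x,y,z]$ and $[xw,yw,zw]=[x,y,z]w$. The truss associated with a ring $R$ is $R$ with $[a,b,c]=a-b+c$ and the ring multiplication. For an essentially small category $\mathcal{C}$, its Grothendieck heap $\mathrm{K}_0^{\mathrm{heap}}(\mathcal{C})$ is the heap generated by the isomorphism classes $\overline{X}$ of objects of $\mathcal{C}$, subject to the relations $[\overline{X},\overline{Y},\overline{Z}]=\overline{X\sqcup_Y Z}$ for every pushout square $X\leftarrow Y\rightarrow Z$ in $\mathcal{C}$ in which at least one of the two maps $Y\to X$, $Y\to Z$ is a monomorphism. *)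

(* The category `set` of finite sets is modelled with
   objects = finTypes and morphisms = (Coq) functions between them, equality
   of morphisms being pointwise equality. *)
From mathcomp Require Import all_boot all_order all_algebra.
Set Implicit Arguments. Unset Strict Implicit. Unset Printing Implicit Defensive.
Import Order.TTheory GRing.Theory Num.Theory.

Definition fs_iso (X Y : finType) : Prop :=
  exists (f : X -> Y) (g : Y -> X), (forall x, g (f x) = x) /\ (forall y, f (g y) = y).

Definition fs_mono (Y X : finType) (f : Y -> X) : Prop :=
  forall (W : finType) (h1 h2 : W -> Y),
    (forall w, f (h1 w) = f (h2 w)) -> forall w, h1 w = h2 w.

Definition fs_pushout (X Y Z P : finType) (f : Y -> X) (g : Y -> Z)
  (i : X -> P) (j : Z -> P) : Prop :=
  (forall y, i (f y) = j (g y)) /\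
  forall (W : finType) (u : X -> W) (v : Z -> W),
    (forall y, u (f y) = v (g y)) ->
    exists h : P -> W,
      (forall x, h (i x) = u x) /\ (forall z, h (j z) = v z) /\
      forall h' : P -> W, (forall x, h' (i x) = u x) -> (forall z, h' (j z) = v z) ->
        forall p, h' p = h p.

Inductive hterm : Type :=
  | hgen : finType -> hterm
  | hop : hterm -> hterm -> hterm -> hterm.

(* The congruence presenting the Grothendieck heap K0^heap(set):
   heap axioms, generators are isomorphism classes, and the pushout
   relations [X, Y, Z] = X ⊔_Y Z when one leg is a monomorphism. *)
Inductive heq : hterm -> hterm -> Prop :=
  | heq_refl t : heq t t
  | heq_sym s t : heq s t -> heq t s
  | heq_trans s t u : heq s t -> heq t u -> heq s u
  | heq_op a b c a' b' c' : heq a a' -> heq b b' -> heq c c' ->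
      heq (hop a b c) (hop a' b' c')
  | heq_assoc a b c d e : heq (hop a b (hop c d e)) (hop (hop a b c) d e)
  | heq_cancl x y : heq (hop x x y) y
  | heq_cancr x y : heq (hop y x x) y
  | heq_iso (X Y : finType) : fs_iso X Y -> heq (hgen X) (hgen Y)
  | heq_pushout (X Y Z P : finType) (f : Y -> X) (g : Y -> Z)
      (i : X -> P) (j : Z -> P) :
      (fs_mono f \/ fs_mono g) -> fs_pushout f g i j ->
      heq (hop (hgen X) (hgen Y) (hgen Z)) (hgen P).

(* K0^heap(set) is hterm modulo heq.  The map induced by  A |-> |A|
   into the heap of (Z,+), [a,b,c] = a - b + c. *)
Fixpoint hcard (t : hterm) : int :=
  match t with
  | hgen A => (#|A| : int)
  | hop a b c => (hcard a - hcard b + hcard c)%R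
  end.

Fixpoint hmul_gen (A : finType) (t : hterm) : hterm :=
  match t with
  | hgen B => hgen (A * B)%type
  | hop x y z => hop (hmul_gen A x) (hmul_gen A y) (hmul_gen A z)
  end.

Fixpoint hmul (s t : hterm) : hterm :=
  match s with
  | hgen A => hmul_gen A t
  | hop a b c => hop (hmul a t) (hmul b t) (hmul c t)
  end.

(* Pushing out along an injection glues Z to the part of X outside the image
   of Y, so |X ⊔_Y Z| = |X| - |Y| + |Z| and counting is a well-defined heap
   morphism.  Conversely, a disjoint union is a pushout over the empty set, so
   [[m], [0], [n]] = [m + n] in the Grothendieck heap; with this every term
   reduces to a normal form [[p], [q], [0]], and normal forms with the same
   p - q are identified.  The product is multiplicative because
   |A × B| = |A| |B|, and it is well defined because counting is injective. *)

From mathcomp Require Import all_boot all_order all_algebra zify.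
From Stdlib Require Import Setoid Morphisms.
Import Order.TTheory GRing.Theory Num.Theory.
Set Implicit Arguments. Unset Strict Implicit. Unset Printing Implicit Defensive.

Lemma fs_mono_inj (Y X : finType) (f : Y -> X) : fs_mono f -> injective f.
Proof. by move=> mono y1 y2 e; apply: (mono unit (fun=> y1) (fun=> y2) (fun=> e) tt). Qed.

Lemma fs_pushout_sym (X Y Z P : finType) (f : Y -> X) (g : Y -> Z)
    (i : X -> P) (j : Z -> P) :
  fs_pushout f g i j -> fs_pushout g f j i.
Proof.
case=> comm univ; split=> [y|W u v e]; first by rewrite comm.
have [h [hi [hj h_uniq]]] := univ W v u (fun y => esym (e y)).
by exists h; split=> //; split=> // h' e1 e2; apply: h_uniq.
Qed.

Section PushoutCard.

Variables (X Y Z P : finType) (f : Y -> X) (g : Y -> Z) (i : X -> P) (j : Z -> P).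
Hypothesis po : fs_pushout f g i j.

Lemma fs_pushout_codomU p : (p \in codom i) || (p \in codom j).
Proof.
have [_ univ] := po.
have [h [_ [_ h_uniq]]] := univ bool (fun=> true) (fun=> true) (fun=> erefl).
rewrite (h_uniq (fun p => (p \in codom i) || (p \in codom j))) => [|x|z].
- by rewrite -(h_uniq (fun=> true)).
- by rewrite codom_f.
- by rewrite codom_f orbT.
Qed.

Lemma fs_pushout_retraction :
  exists r : P -> option X,
    (forall x, r (i x) = if x \in codom f then None else Some x) /\
    (forall z, r (j z) = None).
Proof.
have [_ univ] := po.
pose u x := if x \in codom f then None else Some x.
have uf y : u (f y) = None by rewrite /u codom_f.
by have [r [ri [rj _]]] := univ (option X) u (fun=> None) uf; exists r.
Qed.

Lemma fs_pushout_inj_off_codom : {in [predC codom f] &, injective i}.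
Proof.
have [r [ri _]] := fs_pushout_retraction.
move=> x1 x2 /negPf x1f /negPf x2f e.
by have := ri x1; rewrite e ri x1f x2f => -[].
Qed.

Lemma fs_pushout_codomC : [predC codom j] =i [seq i x | x in [predC codom f]].
Proof.
have [comm _] := po; have [r [ri rj]] := fs_pushout_retraction.
move=> p; rewrite !inE; apply/idP/idP => [pj | /mapP[x]].
- have /codomP[x def_p] : p \in codom i.
    by have := fs_pushout_codomU p; rewrite (negPf pj) orbF.
  subst p; apply: map_f; rewrite mem_enum !inE; apply: contra pj => /codomP[y ->].
  by rewrite comm codom_f.
- rewrite mem_enum !inE => /negPf xf ->; apply/codomP => -[z e].
  by have := ri x; rewrite xf e rj.
Qed.

Hypothesis f_inj : injective f.

Lemma fs_pushout_inj_r : injective j.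
Proof.
have [_ univ] := po.
pose u x := if [pick y | f y == x] is Some y then Some (g y) else None.
have uf y : u (f y) = Some (g y).
  by rewrite /u; case: pickP => [y' /eqP/f_inj -> //|/(_ y)]; rewrite eqxx.
have [h [_ [hj _]]] := univ (option Z) u Some uf.
by move=> z1 z2 e; apply: Some_inj; rewrite -!hj e.
Qed.

(* Inclusion-exclusion: P is Z together with the part of X outside f(Y). *)
Lemma card_fs_pushout : #|P| + #|Y| = #|X| + #|Z|.
Proof.
have cardP : #|codom j| + #|[predC codom j]| = #|P| by apply: cardC.
have cardX : #|codom f| + #|[predC codom f]| = #|X| by apply: cardC.
have cardC : #|[predC codom j]| = #|[predC codom f]|.
  rewrite -(card_in_image fs_pushout_inj_off_codom).
  exact: eq_card fs_pushout_codomC.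
move: cardP cardX; rewrite cardC (card_codom fs_pushout_inj_r) (card_codom f_inj).
lia.
Qed.

End PushoutCard.

Lemma card_fs_pushout_mono (X Y Z P : finType) (f : Y -> X) (g : Y -> Z)
    (i : X -> P) (j : Z -> P) :
  fs_mono f \/ fs_mono g -> fs_pushout f g i j -> #|P| + #|Y| = #|X| + #|Z|.
Proof.
case=> [/fs_mono_inj f_inj | /fs_mono_inj g_inj] po.
- exact: card_fs_pushout po f_inj.
- by rewrite (card_fs_pushout (fs_pushout_sym po) g_inj) addnC.
Qed.

Lemma fs_iso_card (X Y : finType) : fs_iso X Y -> #|X| = #|Y|.
Proof. by case=> f [g [fK gK]]; apply: bij_eq_card; exists g. Qed.

Lemma heq_hcard s t : heq s t -> hcard s = hcard t.
Proof.
elim=> /= [||||||| X Y /fs_iso_card -> // | X Y Z P f g i j mono po].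
all: try by move=> *; lia.
by rewrite addrAC -PoszD -(card_fs_pushout_mono mono po) PoszD addrK.
Qed.

#[local] Instance heq_Equivalence : Equivalence heq.
Proof. by split; [exact: heq_refl | exact: heq_sym | exact: heq_trans]. Qed.

#[local] Hint Resolve heq_refl : core.

#[local] Instance hop_Proper : Proper (heq ==> heq ==> heq ==> heq) hop.
Proof. by move=> a a' ea b b' eb c c' ec; apply: heq_op. Qed.

Lemma hop_cancel_common a b c e x :
  heq (hop (hop a b e) (hop c b e) x) (hop a c x).
Proof.
have inner : heq (hop e (hop c b e) x) (hop b c x).
  rewrite -{2}(heq_cancl (hop c b e) x) heq_assoc (heq_assoc b c c).
  by rewrite heq_cancr heq_cancl.
by rewrite -heq_assoc inner heq_assoc heq_cancr.
Qed.

Definition hord n := hgen 'I_n.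
Definition hdiff p q := hop (hord p) (hord q) (hord 0).

Lemma heq_hord_card (A : finType) : heq (hgen A) (hord #|A|).
Proof.
by apply: heq_iso; exists enum_rank, enum_val; split; [exact: enum_rankK | exact: enum_valK].
Qed.

Lemma heq_coprod (A B : finType) :
  heq (hop (hgen A) (hord 0) (hgen B)) (hgen (A + B)%type).
Proof.
have from0 (T : Type) : 'I_0 -> T by case.
apply: (@heq_pushout _ _ _ _ (from0 A) (from0 B) inl inr).
  by left=> W h1 h2 _ w; case: (h1 w).
split=> [[]//|W u v _].
exists (fun p => match p with inl x => u x | inr z => v z end).
by split=> //; split=> // h' hu hv [x|z].
Qed.

Lemma hord_add a c : heq (hop (hord a) (hord 0) (hord c)) (hord (a + c)).
Proof. by rewrite heq_coprod heq_hord_card card_sum !card_ord. Qed.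

Lemma hord_addK a b c : heq (hop (hord a) (hord b) (hord (b + c))) (hord (a + c)).
Proof. by rewrite -hord_add heq_assoc heq_cancr hord_add. Qed.

Lemma hdiff_shift p q k : heq (hdiff (p + k) (q + k)) (hdiff p q).
Proof. by rewrite /hdiff -(hord_addK p q k) -heq_assoc heq_cancl. Qed.

Lemma hcard_hdiff p q : hcard (hdiff p q) = (p%:Z - q%:Z)%R.
Proof. by rewrite /= !card_ord addr0. Qed.

Lemma hterm_hdiff t : exists p q, heq t (hdiff p q).
Proof.
elim: t => [A | t1 [p1 [q1 e1]] t2 [p2 [q2 e2]] t3 [p3 [q3 e3]]].
  by exists #|A|, 0; rewrite /hdiff heq_cancr; apply: heq_hord_card.
exists (p1 + q2 + p3), (q3 + (p2 + q1)); rewrite e1 e2 e3.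
rewrite -(hdiff_shift p1 q1 q2) -(hdiff_shift p2 q2 q1) (addnC q2 q1).
rewrite -(hdiff_shift p3 q3 (p2 + q1)) /hdiff hop_cancel_common.
by rewrite heq_assoc (addnC p3) hord_addK.
Qed.

Lemma hcard_inj s t : hcard s = hcard t -> heq s t.
Proof.
have [p [q es]] := hterm_hdiff s; have [p' [q' et]] := hterm_hdiff t.
rewrite (heq_hcard es) (heq_hcard et) !hcard_hdiff => e.
rewrite es et -(hdiff_shift p q q') -(hdiff_shift p' q' q) (addnC q q').
by have -> : p + q' = p' + q by lia.
Qed.

Lemma hcard_surj (n : int) : exists t, hcard t = n.
Proof.
case: n => k; first by exists (hdiff k 0); rewrite hcard_hdiff subr0.
by exists (hdiff 0 k.+1); rewrite hcard_hdiff sub0r NegzE.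
Qed.

Lemma hcard_hmul_gen (A : finType) t : hcard (hmul_gen A t) = (#|A|%:Z * hcard t)%R.
Proof.
elim: t => [B | a IHa b IHb c IHc] /=; first by rewrite card_prod PoszM.
by rewrite IHa IHb IHc mulrDr mulrBr.
Qed.

Lemma hcard_hmul s t : hcard (hmul s t) = (hcard s * hcard t)%R.
Proof.
elim: s => [A | a IHa b IHb c IHc] /=; first exact: hcard_hmul_gen.
by rewrite IHa IHb IHc mulrDl mulrBl.
Qed.

Theorem mainTheorem6 :
  (* A |-> |A| induces a well-defined heap morphism K0^heap(set) -> (Z, a-b+c) *)
  (forall s t, heq s t -> hcard s = hcard t) /\
  (forall a b c, hcard (hop a b c) = (hcard a - hcard b + hcard c)%R) /\
  (* which is injective *)
  (forall s t, hcard s = hcard t -> heq s t) /\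
  (* and surjective *)
  (forall n : int, exists t, hcard t = n) /\
  (* the product induced by the cartesian product is well defined on K0^heap(set) *)
  (forall s s' t t', heq s s' -> heq t t' -> heq (hmul s t) (hmul s' t')) /\
  (* and corresponds to the ring multiplication of Z *)
  (forall s t, hcard (hmul s t) = (hcard s * hcard t)%R).
Proof.
split; first exact: heq_hcard.
split; first by [].
split; first exact: hcard_inj.
split; first exact: hcard_surj.
split; last exact: hcard_hmul.
move=> s s' t t' /heq_hcard es /heq_hcard et.
by apply: hcard_inj; rewrite !hcard_hmul es et.
Qed.
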